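(* Let $S$ be a Stone relation algebra, and let $C : S\to\mathbb{N}\cup\{\infty\}$ map each $x$ to the number of atoms $a\in S$ with $a\sqsubseteq x$. Then $C$ satisfies: (C1a) $C(\bot)=0$; (C2a) $C(x)=1$ for every atom $x$; (C3) $C(x^{\smile})=C(x)$ for all $x$; (C4a) $C(x)+C(y)=C(x\sqcup y)+C(x\sqcap y)$ for all $x,y$; (C4b) $x\sqsubseteq y$ implies $C(x)\le C(y)$. If moreover $S$ is atomic, then $C$ also satisfies: (C1b) $C(x)=0\iff x=\bot$; (C5a) $C(x^{\smile}y\sqcap z)\le C(xz\sqcap y)$ for all $y,z$ and all univalent $x$; (C5b) $C(x\sqcap yz^{\smile})\le C(xz\sqcap y)$ for all $y,z$ and all univalent $x$; (C5c) $C(yx)\le C(y)$ for all $y$ and all univalent $x$; (C5d) $C(x\sqcap y\top)\le C(y)$ for all $y$ and all univalent $x$; (C5e) $C(x\sqcap yy^{\smile})\le C(y)$ for all $y$ and all univalent $x$; (C6a) $C(1\sqcap xx^{\smile})\le C(x)$ for all $x$; (C6b) $C(1\sqcap x^{\smile}x)\le C(x)$ for all $x$.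
   Context: A Stone relation algebra is a structure $(S,\sqcup,\sqcap,\cdot,\overline{\,\cdot\,},{}^{\smile},\bot,\top,1)$ (write $xy$ for $x\cdot y$, $\overline{x}$ for the pseudocomplement, $x^{\smile}$ for the converse) such that: $(S,\sqcup,\sqcap,\bot,\top)$ is a bounded distributive lattice with order $x\sqsubseteq y\iff x\sqcup y=y$; $x\sqcap y=\bot\iff x\sqsubseteq\overline{y}$; $\overline{x}\sqcup\overline{\overline{x}}=\top$; $\cdot$ is associative with two-sided unit $1$, distributes over $\sqcup$ on both sides, and $\bot$ is a zero of $\cdot$; $x^{\smile\smile}=x$, $(xy)^{\smile}=y^{\smile}x^{\smile}$, $(x\sqcup y)^{\smile}=x^{\smile}\sqcup y^{\smile}$; $\overline{\overline{1}}=1$; $\overline{\overline{xy}}=\overline{\overline{x}}\,\overline{\overline{y}}$; $xy\sqcap z\sqsubseteq x(y\sqcap x^{\smile}z)$. An atom is an element $x\neq\bot$ such that $\bot\neq y\sqsubseteq x$ implies $y=x$. $S$ is atomic if every $x\neq\bot$ has an atom below it. $x$ is univalent if $x^{\smile}x\sqsubseteq 1$. Arithmetic in $\mathbb{N}\cup\{\infty\}$ is the usual one with $n+\infty=\infty+n=\infty$ and $n\le\infty$. *)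

From Stdlib Require Import List.
Import ListNotations.

Record StoneRA : Type := {
  car : Type;
  sup : car -> car -> car;
  meet : car -> car -> car;
  comp : car -> car -> car;
  npc : car -> car;          (* pseudocomplement  \overline{x} *)
  conv : car -> car;
  bot : car;
  top : car;
  one : car;
  sup_assoc : forall x y z, sup x (sup y z) = sup (sup x y) z;
  sup_comm : forall x y, sup x y = sup y x;
  meet_assoc : forall x y z, meet x (meet y z) = meet (meet x y) z;
  meet_comm : forall x y, meet x y = meet y x;
  sup_absorb : forall x y, sup x (meet x y) = x;
  meet_absorb : forall x y, meet x (sup x y) = x;
  meet_sup_distr : forall x y z, meet x (sup y z) = sup (meet x y) (meet x z);
  sup_bot : forall x, sup x bot = x;
  meet_top : forall x, meet x top = x;
  pseudocompl : forall x y, meet x y = bot <-> sup x (npc y) = npc y;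
  stone : forall x, sup (npc x) (npc (npc x)) = top;
  comp_assoc : forall x y z, comp x (comp y z) = comp (comp x y) z;
  comp_one_l : forall x, comp one x = x;
  comp_one_r : forall x, comp x one = x;
  comp_sup_distr_l : forall x y z, comp x (sup y z) = sup (comp x y) (comp x z);
  comp_sup_distr_r : forall x y z, comp (sup x y) z = sup (comp x z) (comp y z);
  comp_bot_l : forall x, comp bot x = bot;
  comp_bot_r : forall x, comp x bot = bot;
  conv_invol : forall x, conv (conv x) = x;
  conv_comp : forall x y, conv (comp x y) = comp (conv y) (conv x);
  conv_sup : forall x y, conv (sup x y) = sup (conv x) (conv y);
  npc_npc_one : npc (npc one) = one;
  npc_npc_comp : forall x y, npc (npc (comp x y)) = comp (npc (npc x)) (npc (npc y));
  dedekind : forall x y z,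
    sup (meet (comp x y) z) (comp x (meet y (comp (conv x) z)))
    = comp x (meet y (comp (conv x) z))
}.

Section Defs.
Variable S : StoneRA.

Definition le (x y : car S) : Prop := sup S x y = y.

Definition atom (x : car S) : Prop :=
  x <> bot S /\ forall y, y <> bot S -> le y x -> y = x.

Definition atomic : Prop :=
  forall x, x <> bot S -> exists a, atom a /\ le a x.

Definition univalent (x : car S) : Prop := le (comp S (conv S x) x) (one S).

End Defs.

Inductive enat : Type := Fin (n : nat) | Inf.

Definition eadd (a b : enat) : enat :=
  match a, b with
  | Fin m, Fin n => Fin (m + n)
  | _, _ => Inf
  end.

Definition ele (a b : enat) : Prop :=
  match a, b with
  | _, Inf => True
  | Inf, Fin _ => False
  | Fin m, Fin n => m <= n
  end.

Definition atom_count (S : StoneRA) (x : car S) (c : enat) : Prop :=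
  match c with
  | Fin n => exists l : list (car S),
      NoDup l /\ (forall a, In a l <-> (atom S a /\ le S a x)) /\ length l = n
  | Inf => ~ exists l : list (car S), forall a, atom S a -> le S a x -> In a l
  end.

(* Atoms below x are counted by C x, so lattice facts become cardinality facts:
   monotonicity is inclusion, (C3) is the bijection a |-> a~ on atoms, and (C4a) is
   inclusion-exclusion because atoms are join-prime.  For univalent x, Dedekind's law
   gives an atom b below x a /\ y for every atom a below x~ y /\ z (resp. below a z /\ y
   for a below x /\ y z~), and univalence makes a |-> b injective; this proves (C5a) and
   (C5b), of which the remaining inequalities are instances. *)

From Pilot Require Import Defs.
From Stdlib Require Import List Lia Classical ClassicalEpsilon.
Import ListNotations.

Lemma ele_trans a b c : ele a b -> ele b c -> ele a c.
Proof. destruct a, b, c; simpl; tauto || lia. Qed.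

Lemma ele_antisym a b : ele a b -> ele b a -> a = b.
Proof. destruct a, b; simpl; try tauto. intros; f_equal; lia. Qed.

Lemma ele_Inf_l c : ele Inf c -> c = Inf.
Proof. destruct c; simpl; tauto. Qed.

Section Cardinality.
Context {T : Type}.

Definition has_card (P : T -> Prop) (c : enat) : Prop :=
  match c with
  | Fin n => exists l : list T, NoDup l /\ (forall a, In a l <-> P a) /\ length l = n
  | Inf => ~ exists l : list T, forall a, P a -> In a l
  end.

Lemma has_card_unique P c1 c2 : has_card P c1 -> has_card P c2 -> c1 = c2.
Proof.
  destruct c1 as [n|], c2 as [m|]; simpl; auto.
  - intros [l1 [N1 [I1 <-]]] [l2 [N2 [I2 <-]]].
    assert (length l1 <= length l2)
      by (apply NoDup_incl_length; auto; intros a Ha; apply I2, I1, Ha).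
    assert (length l2 <= length l1)
      by (apply NoDup_incl_length; auto; intros a Ha; apply I1, I2, Ha).
    f_equal; lia.
  - intros [l [_ [I _]]] H. exfalso. apply H. exists l. intros a Ha. apply I, Ha.
  - intros H [l [_ [I _]]]. exfalso. apply H. exists l. intros a Ha. apply I, Ha.
Qed.

Lemma has_card_ext P Q c : (forall a, P a <-> Q a) -> has_card P c -> has_card Q c.
Proof.
  intros E. destruct c; simpl.
  - intros [l [N [I L]]]. exists l. split; [exact N|split; [|exact L]].
    intros a. rewrite I. apply E.
  - intros H [l Hl]. apply H. exists l. intros a Ha. apply Hl, E, Ha.
Qed.

Lemma has_card_Fin0 P a : has_card P (Fin 0) -> ~ P a.
Proof. intros [[|b l] [_ [I L]]] Pa; [apply (I a), Pa | discriminate]. Qed.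

Section Injection.
Variables (P Q : T -> Prop) (R : T -> T -> Prop).
Hypothesis R_total : forall a, P a -> exists b, Q b /\ R a b.
Hypothesis R_inj : forall a a' b, P a -> P a' -> R a b -> R a' b -> a = a'.

Lemma image_list lp : NoDup lp -> (forall a, In a lp -> P a) ->
  exists lq, NoDup lq /\ length lq = length lp /\ (forall b, In b lq -> Q b) /\
    (forall b, In b lq -> exists a, In a lp /\ R a b).
Proof.
  induction lp as [|a lp IH]; intros Nd Hp.
  - exists []. repeat split; simpl; try constructor; tauto.
  - apply NoDup_cons_iff in Nd as [Ha Nd].
    destruct (R_total a) as [b [Qb Rab]]; [apply Hp; left; reflexivity|].
    destruct IH as [lq [Nq [Lq [Iq Pre]]]]; [exact Nd | intros; apply Hp; right; auto|].
    exists (b :: lq). repeat split.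
    + constructor; [|exact Nq]. intros Hb. destruct (Pre b Hb) as [a' [Ha' Ra'b]].
      apply Ha. replace a with a'; [exact Ha'|].
      apply (R_inj a' a b); auto; apply Hp; [right|left]; auto.
    + simpl. congruence.
    + intros b' [<-|Hb']; auto.
    + intros b' [<-|Hb'].
      * exists a. split; [left|]; auto.
      * destruct (Pre b' Hb') as [a' [Ha' Ra']]. exists a'. split; [right|]; auto.
Qed.

Lemma preimage_list lq : exists lp, forall a b, P a -> R a b -> In b lq -> In a lp.
Proof.
  induction lq as [|b lq [lp Hlp]].
  - exists []. intros a b _ _ [].
  - destruct (classic (exists a, P a /\ R a b)) as [[a0 [Pa0 Ra0]]|Hno].
    + exists (a0 :: lp). intros a b' Pa Rab' [<-|Hb'].
      * left. apply (R_inj a0 a b); auto.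
      * right. eauto.
    + exists lp. intros a b' Pa Rab' [<-|Hb']; [exfalso; eauto | eauto].
Qed.

Lemma has_card_le_inj cp cq : has_card P cp -> has_card Q cq -> ele cp cq.
Proof.
  destruct cq as [m|]; [|destruct cp; simpl; auto].
  intros Hp [lq [Nq [Iq <-]]]. destruct cp as [n|]; simpl.
  - destruct Hp as [lp [Np [Ip <-]]].
    destruct (image_list lp Np) as [lb [Nb [<- [Qb _]]]]; [intros a; apply Ip|].
    apply NoDup_incl_length; [exact Nb|]. intros b Hb. apply Iq, Qb, Hb.
  - apply Hp. destruct (preimage_list lq) as [lp Hlp]. exists lp. intros a Pa.
    destruct (R_total a Pa) as [b [Qb Rab]]. apply (Hlp a b); auto. apply Iq, Qb.
Qed.

End Injection.

Lemma has_card_le_sub (P Q : T -> Prop) cp cq :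
  (forall a, P a -> Q a) -> has_card P cp -> has_card Q cq -> ele cp cq.
Proof.
  intros PQ. apply has_card_le_inj with (R := @eq T).
  - intros a Pa. exists a. auto.
  - intros a a' b _ _ -> ->. reflexivity.
Qed.

Definition asbool (P : T -> Prop) (a : T) : bool :=
  if excluded_middle_informative (P a) then true else false.

Lemma asbool_true P a : asbool P a = true <-> P a.
Proof. unfold asbool. destruct excluded_middle_informative; split; congruence || tauto. Qed.

Lemma asbool_false P a : negb (asbool P a) = true <-> ~ P a.
Proof. unfold asbool. destruct excluded_middle_informative; simpl; split; congruence || tauto. Qed.

Lemma has_card_union_inter (P Q : T -> Prop) cp cq cu ci :
  has_card P cp -> has_card Q cq ->
  has_card (fun a => P a \/ Q a) cu -> has_card (fun a => P a /\ Q a) ci ->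
  eadd cp cq = eadd cu ci.
Proof.
  intros Hp Hq Hu Hi.
  assert (Hinf : cp = Inf \/ cq = Inf -> eadd cp cq = eadd cu ci).
  { intros Hinf. assert (cu = Inf) as ->.
    { destruct Hinf as [->| ->]; apply ele_Inf_l;
        [apply (has_card_le_sub P _ _ _ (fun a Pa => or_introl Pa) Hp Hu)
        |apply (has_card_le_sub Q _ _ _ (fun a Qa => or_intror Qa) Hq Hu)]. }
    destruct Hinf as [-> | ->]; [|destruct cp]; reflexivity. }
  destruct cp as [n|]; [destruct cq as [m|]|]; try (apply Hinf; auto; fail).
  destruct Hp as [lp [Np [Ip <-]]], Hq as [lq [Nq [Iq <-]]].
  assert (Hu' : has_card (fun a => P a \/ Q a) (Fin (length (lp ++ filter (fun a => negb (asbool P a)) lq)))).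
  { exists (lp ++ filter (fun a => negb (asbool P a)) lq). split; [|split; [|reflexivity]].
    - apply NoDup_app; [exact Np | apply NoDup_filter, Nq|].
      intros a Ha Hout. apply filter_In, proj2, asbool_false in Hout. apply Hout, Ip, Ha.
    - intros a. rewrite in_app_iff, filter_In, asbool_false, Ip, Iq.
      destruct (classic (P a)); tauto. }
  assert (Hi' : has_card (fun a => P a /\ Q a) (Fin (length (filter (asbool P) lq)))).
  { exists (filter (asbool P) lq). split; [apply NoDup_filter, Nq | split; [|reflexivity]].
    intros a. rewrite filter_In, asbool_true, Iq. tauto. }
  rewrite (has_card_unique _ _ _ Hu Hu'), (has_card_unique _ _ _ Hi Hi').
  simpl. rewrite length_app, <- (filter_length (asbool P) lq). f_equal. lia.
Qed.

End Cardinality.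

Section StoneAlgebra.
Variable S : StoneRA.
Notation sup := (sup S). Notation meet := (meet S). Notation comp := (comp S).
Notation conv := (conv S). Notation bot := (bot S). Notation top := (top S).
Notation one := (one S). Notation le := (le S). Notation atom := (atom S).

Lemma sup_idem x : sup x x = x.
Proof. rewrite <- (meet_absorb S x x) at 2. apply sup_absorb. Qed.

Lemma meet_idem x : meet x x = x.
Proof. rewrite <- (sup_idem x) at 2. apply meet_absorb. Qed.

Lemma le_refl x : le x x.
Proof. apply sup_idem. Qed.

Lemma le_trans x y z : le x y -> le y z -> le x z.
Proof. unfold Defs.le. intros Hxy Hyz. rewrite <- Hyz, sup_assoc, Hxy. reflexivity. Qed.

Lemma le_antisym x y : le x y -> le y x -> x = y.
Proof. unfold Defs.le. intros Hxy Hyx. rewrite <- Hxy, sup_comm. symmetry. exact Hyx. Qed.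

Lemma le_iff_meet x y : le x y <-> meet x y = x.
Proof.
  unfold Defs.le. split; intros H; rewrite <- H.
  - apply meet_absorb.
  - rewrite sup_comm, meet_comm. apply sup_absorb.
Qed.

Lemma meet_lb_l x y : le (meet x y) x.
Proof. apply le_iff_meet. rewrite meet_comm, meet_assoc, meet_idem. reflexivity. Qed.

Lemma meet_lb_r x y : le (meet x y) y.
Proof. rewrite meet_comm. apply meet_lb_l. Qed.

Lemma le_meet x y z : le x (meet y z) <-> le x y /\ le x z.
Proof.
  split.
  - intros H. split; eapply le_trans; [exact H | apply meet_lb_l | exact H | apply meet_lb_r].
  - rewrite !le_iff_meet. intros [Hy Hz]. rewrite meet_assoc, Hy, Hz. reflexivity.
Qed.

Lemma sup_ub_l x y : le x (sup x y).
Proof. unfold Defs.le. rewrite sup_assoc, sup_idem. reflexivity. Qed.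

Lemma sup_ub_r x y : le y (sup x y).
Proof. rewrite sup_comm. apply sup_ub_l. Qed.

Lemma bot_le x : le bot x.
Proof. unfold Defs.le. rewrite sup_comm. apply sup_bot. Qed.

Lemma le_top x : le x top.
Proof. apply le_iff_meet, meet_top. Qed.

Lemma le_bot x : le x bot -> x = bot.
Proof. unfold Defs.le. rewrite sup_bot. auto. Qed.

Lemma comp_mono_l z x y : le x y -> le (comp z x) (comp z y).
Proof. unfold Defs.le. intros H. rewrite <- comp_sup_distr_l, H. reflexivity. Qed.

Lemma comp_mono_r z x y : le x y -> le (comp x z) (comp y z).
Proof. unfold Defs.le. intros H. rewrite <- comp_sup_distr_r, H. reflexivity. Qed.

Lemma conv_mono x y : le x y -> le (conv x) (conv y).
Proof. unfold Defs.le. intros H. rewrite <- conv_sup, H. reflexivity. Qed.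

Lemma conv_le x y : le (conv x) y -> le x (conv y).
Proof. intros H. rewrite <- (conv_invol S x). apply conv_mono, H. Qed.

Lemma le_conv x y : le x (conv y) -> le (conv x) y.
Proof. intros H. rewrite <- (conv_invol S y). apply conv_mono, H. Qed.

Lemma conv_bot : conv bot = bot.
Proof. apply le_bot, le_conv, bot_le. Qed.

Lemma conv_top : conv top = top.
Proof. apply le_antisym; [apply le_top | apply conv_le, le_top]. Qed.

Lemma conv_one : conv one = one.
Proof.
  transitivity (comp (conv one) (conv (conv one))).
  - rewrite conv_invol, comp_one_r. reflexivity.
  - rewrite <- conv_comp, comp_one_r. apply conv_invol.
Qed.

Lemma conv_meet x y : conv (meet x y) = meet (conv x) (conv y).
Proof.
  apply le_antisym.
  - apply le_meet. split; apply conv_mono; [apply meet_lb_l | apply meet_lb_r].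
  - apply conv_le, le_meet. split; rewrite <- conv_invol; apply conv_mono;
      [apply meet_lb_l | apply meet_lb_r].
Qed.

Lemma dedekind_le x y z : le (meet (comp x y) z) (comp x (meet y (comp (conv x) z))).
Proof. apply dedekind. Qed.

Lemma dedekind_le_dual x y z : le (meet (comp x y) z) (comp (meet x (comp z (conv y))) y).
Proof.
  pose proof (conv_mono _ _ (dedekind_le (conv y) (conv x) (conv z))) as H.
  repeat rewrite ?conv_meet, ?conv_comp, ?conv_invol in H. exact H.
Qed.

Lemma le_comp_meet_neq_bot_r x y b :
  le b (comp x y) -> b <> bot -> meet y (comp (conv x) b) <> bot.
Proof.
  intros Hb Hnb Hm. apply Hnb, le_bot.
  eapply le_trans; [apply le_meet; split; [exact Hb | apply le_refl]|].
  rewrite <- (comp_bot_r S x), <- Hm. apply dedekind_le.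
Qed.

Lemma le_comp_meet_neq_bot_l x y b :
  le b (comp x y) -> b <> bot -> meet x (comp b (conv y)) <> bot.
Proof.
  intros Hb Hnb Hm. apply Hnb, le_bot.
  eapply le_trans; [apply le_meet; split; [exact Hb | apply le_refl]|].
  rewrite <- (comp_bot_l S y), <- Hm. apply dedekind_le_dual.
Qed.

Lemma univalent_one : univalent S one.
Proof. unfold univalent. rewrite conv_one, comp_one_l. apply le_refl. Qed.

Lemma univalent_conv_comp_le x a b :
  univalent S x -> le b (comp x a) -> le (comp (conv x) b) a.
Proof.
  intros Hu Hb. eapply le_trans; [apply comp_mono_l, Hb|].
  rewrite comp_assoc. eapply le_trans; [apply comp_mono_r, Hu|].
  rewrite comp_one_l. apply le_refl.
Qed.

Lemma atom_neq_bot a : atom a -> a <> bot.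
Proof. intros [H _]. exact H. Qed.

Lemma atom_le_eq a b : atom a -> atom b -> le b a -> b = a.
Proof. intros [_ Ha] Hb. apply Ha, atom_neq_bot, Hb. Qed.

Lemma atom_le_of_meet a w : atom a -> meet a w <> bot -> le a w.
Proof. intros [_ Ha] Hm. apply le_iff_meet, Ha; [exact Hm | apply meet_lb_l]. Qed.

Lemma atom_eq_of_meet a b : atom a -> atom b -> meet a b <> bot -> a = b.
Proof.
  intros Ha Hb Hm. apply le_antisym; apply atom_le_of_meet; auto.
  rewrite meet_comm. exact Hm.
Qed.

Lemma atom_le_sup a x y : atom a -> le a (sup x y) -> le a x \/ le a y.
Proof.
  intros Ha H. destruct (classic (meet a x = bot)) as [Hx|Hx].
  - right. apply le_iff_meet in H. rewrite meet_sup_distr, Hx, sup_comm, sup_bot in H.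
    apply le_iff_meet, H.
  - left. apply atom_le_of_meet; auto.
Qed.

Lemma atom_conv a : atom a -> atom (conv a).
Proof.
  intros [Hnb Ha]. split.
  - intros E. apply Hnb. rewrite <- (conv_invol S a), E. apply conv_bot.
  - intros y Hy Hle. rewrite <- (conv_invol S y). f_equal. apply Ha.
    + intros E. apply Hy. rewrite <- (conv_invol S y), E. apply conv_bot.
    + rewrite <- (conv_invol S a). apply conv_mono, Hle.
Qed.

End StoneAlgebra.

Section AtomCount.
Variable S : StoneRA.
Notation sup := (sup S). Notation meet := (meet S). Notation comp := (comp S).
Notation conv := (conv S). Notation bot := (bot S). Notation top := (top S).
Notation one := (one S). Notation le := (le S). Notation atom := (atom S).

Variable C : car S -> enat.
Hypothesis HC : forall x, atom_count S x (C x).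

Definition atoms_below (x : car S) (a : car S) : Prop := atom a /\ le a x.

Lemma count_has_card x : has_card (atoms_below x) (C x).
Proof.
  specialize (HC x). destruct (C x); [exact HC|].
  intros [l Hl]. apply HC. exists l. intros a Ha Hle. apply Hl. split; assumption.
Qed.

Lemma count_bot : C bot = Fin 0.
Proof.
  apply (has_card_unique _ _ _ (count_has_card bot)).
  exists []. split; [constructor | split; [|reflexivity]].
  intros a. split; [intros []|]. intros [Ha Hle].
  apply (atom_neq_bot S a Ha), le_bot, Hle.
Qed.

Lemma count_atom x : atom x -> C x = Fin 1.
Proof.
  intros Hx. apply (has_card_unique _ _ _ (count_has_card x)).
  exists [x]. split; [repeat constructor; intros [] | split; [|reflexivity]].
  intros a. split.
  - intros [<-|[]]. split; [exact Hx | apply le_refl].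
  - intros [Ha Hle]. left. symmetry. apply atom_le_eq; assumption.
Qed.

Lemma count_mono x y : le x y -> ele (C x) (C y).
Proof.
  intros Hxy. apply (has_card_le_sub (atoms_below x) (atoms_below y));
    [|apply count_has_card..].
  intros a [Ha Hle]. split; [exact Ha | eapply le_trans; eassumption].
Qed.

Lemma count_conv x : C (conv x) = C x.
Proof.
  assert (Hle : forall x, ele (C x) (C (conv x))).
  { intros y. apply (has_card_le_inj (atoms_below y) (atoms_below (conv y))
      (fun a b => b = conv a)); [| |apply count_has_card..].
    - intros a [Ha Hle]. exists (conv a). split; [split|reflexivity].
      + apply atom_conv, Ha.
      + apply conv_mono, Hle.
    - intros a a' b _ _ -> E. rewrite <- (conv_invol S a), E. apply conv_invol. }
  apply ele_antisym; [|apply Hle].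
  rewrite <- (conv_invol S x) at 2. apply Hle.
Qed.

Lemma count_sup_meet x y : eadd (C x) (C y) = eadd (C (sup x y)) (C (meet x y)).
Proof.
  apply has_card_union_inter with (P := atoms_below x) (Q := atoms_below y);
    try apply count_has_card.
  - eapply has_card_ext; [|apply count_has_card]. intros a. split.
    + intros [Ha Hle]. destruct (atom_le_sup S a x y Ha Hle); [left|right]; split; assumption.
    + intros [[Ha Hle]|[Ha Hle]]; split; try assumption; eapply le_trans;
        [exact Hle | apply sup_ub_l | exact Hle | apply sup_ub_r].
  - eapply has_card_ext; [|apply count_has_card]. intros a. unfold atoms_below.
    rewrite le_meet. tauto.
Qed.

Section Atomic.
Hypothesis Hat : atomic S.

Lemma count_eq0 x : C x = Fin 0 <-> x = bot.
Proof.
  split; [|intros ->; apply count_bot].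
  intros E. apply NNPP. intros Hx. destruct (Hat x Hx) as [a Ha].
  pose proof (count_has_card x) as H. rewrite E in H.
  exact (has_card_Fin0 _ a H Ha).
Qed.

Lemma count_conv_comp_meet x y z : univalent S x ->
  ele (C (meet (comp (conv x) y) z)) (C (meet (comp x z) y)).
Proof.
  intros Hu.
  apply (has_card_le_inj (atoms_below (meet (comp (conv x) y) z))
    (atoms_below (meet (comp x z) y)) (fun a b => atom b /\ le b (comp x a)));
    [| |apply count_has_card..].
  - intros a [Ha Hle]. apply le_meet in Hle as [Hy Hz].
    pose proof (le_comp_meet_neq_bot_r S _ _ _ Hy (atom_neq_bot S a Ha)) as Hnb.
    rewrite conv_invol in Hnb.
    destruct (Hat _ Hnb) as [b [Hb Hble]]. apply le_meet in Hble as [Hby Hbxa].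
    exists b. split; [split; [exact Hb|] | split; assumption].
    apply le_meet. split; [|exact Hby].
    eapply le_trans; [exact Hbxa | apply comp_mono_l, Hz].
  - intros a a' b [Ha _] [Ha' _] [Hb Hbxa] [_ Hbxa'].
    apply atom_eq_of_meet; [exact Ha | exact Ha' |]. intros Hm.
    apply (le_comp_meet_neq_bot_r S _ _ _ Hbxa (atom_neq_bot S b Hb)), le_bot.
    rewrite <- Hm. apply le_meet. split; [apply meet_lb_l|].
    eapply le_trans; [apply meet_lb_r | apply univalent_conv_comp_le; assumption].
Qed.

Lemma count_meet_comp_conv x y z : univalent S x ->
  ele (C (meet x (comp y (conv z)))) (C (meet (comp x z) y)).
Proof.
  intros Hu.
  apply (has_card_le_inj (atoms_below (meet x (comp y (conv z))))
    (atoms_below (meet (comp x z) y)) (fun a b => atom b /\ le b (comp a z)));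
    [| |apply count_has_card..].
  - intros a [Ha Hle]. apply le_meet in Hle as [Hx Hy].
    pose proof (le_comp_meet_neq_bot_l S _ _ _ Hy (atom_neq_bot S a Ha)) as Hnb.
    rewrite conv_invol in Hnb.
    destruct (Hat _ Hnb) as [b [Hb Hble]]. apply le_meet in Hble as [Hby Hbaz].
    exists b. split; [split; [exact Hb|] | split; assumption].
    apply le_meet. split; [|exact Hby].
    eapply le_trans; [exact Hbaz | apply comp_mono_r, Hx].
  - intros a a' b [Ha Hax] [Ha' Ha'x] [Hb Hbaz] [_ Hba'z].
    apply le_meet in Hax as [Hax _]. apply le_meet in Ha'x as [Ha'x _].
    assert (Ha'bz : le a' (comp b (conv z))).
    { apply atom_le_of_meet; [exact Ha'|].
      apply (le_comp_meet_neq_bot_l S _ _ _ Hba'z (atom_neq_bot S b Hb)). }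
    assert (Ha'azz : le a' (comp a (comp z (conv z)))).
    { rewrite comp_assoc. eapply le_trans; [exact Ha'bz | apply comp_mono_r, Hbaz]. }
    assert (Haa' : le (comp (conv a) a') one).
    { eapply le_trans; [|exact Hu].
      eapply le_trans; [apply comp_mono_l, Ha'x | apply comp_mono_r, conv_mono, Hax]. }
    symmetry. apply atom_le_eq; [exact Ha | exact Ha' |].
    (* Dedekind and univalence: a' <= a (z z~ /\ a~ a') <= a (a~ a') <= a. *)
    eapply le_trans; [apply le_meet; split; [exact Ha'azz | apply le_refl]|].
    eapply le_trans; [apply dedekind_le|].
    eapply le_trans; [apply comp_mono_l; eapply le_trans; [apply meet_lb_r | exact Haa']|].
    rewrite comp_one_r. apply le_refl.
Qed.

Lemma count_comp_univalent x y : univalent S x -> ele (C (comp y x)) (C y).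
Proof.
  intros Hu. pose proof (count_conv_comp_meet x (conv y) top Hu) as H.
  rewrite meet_top, <- conv_comp, count_conv in H.
  eapply ele_trans; [exact H|]. rewrite <- (count_conv y). apply count_mono, meet_lb_r.
Qed.

Lemma count_meet_comp_top x y : univalent S x -> ele (C (meet x (comp y top))) (C y).
Proof.
  intros Hu. pose proof (count_meet_comp_conv x y top Hu) as H. rewrite conv_top in H.
  eapply ele_trans; [exact H | apply count_mono, meet_lb_r].
Qed.

Lemma count_meet_comp_conv_self x y : univalent S x ->
  ele (C (meet x (comp y (conv y)))) (C y).
Proof.
  intros Hu. eapply ele_trans; [apply (count_meet_comp_conv x y y Hu)|].
  apply count_mono, meet_lb_r.
Qed.

Lemma count_one_meet_comp_conv x : ele (C (meet one (comp x (conv x)))) (C x).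
Proof. apply count_meet_comp_conv_self, univalent_one. Qed.

Lemma count_one_meet_conv_comp x : ele (C (meet one (comp (conv x) x))) (C x).
Proof.
  pose proof (count_one_meet_comp_conv (conv x)) as H.
  rewrite conv_invol, count_conv in H. exact H.
Qed.

End Atomic.
End AtomCount.

Theorem mainTheorem2 (S : StoneRA) (C : car S -> enat)
  (HC : forall x, atom_count S x (C x)) :
  (* (C1a) *) C (bot S) = Fin 0 /\
  (* (C2a) *) (forall x, atom S x -> C x = Fin 1) /\
  (* (C3)  *) (forall x, C (conv S x) = C x) /\
  (* (C4a) *) (forall x y, eadd (C x) (C y) = eadd (C (sup S x y)) (C (meet S x y))) /\
  (* (C4b) *) (forall x y, le S x y -> ele (C x) (C y)) /\
  (atomic S ->
    (* (C1b) *) (forall x, C x = Fin 0 <-> x = bot S) /\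
    (* (C5a) *) (forall x y z, univalent S x ->
        ele (C (meet S (comp S (conv S x) y) z)) (C (meet S (comp S x z) y))) /\
    (* (C5b) *) (forall x y z, univalent S x ->
        ele (C (meet S x (comp S y (conv S z)))) (C (meet S (comp S x z) y))) /\
    (* (C5c) *) (forall x y, univalent S x -> ele (C (comp S y x)) (C y)) /\
    (* (C5d) *) (forall x y, univalent S x -> ele (C (meet S x (comp S y (top S)))) (C y)) /\
    (* (C5e) *) (forall x y, univalent S x ->
        ele (C (meet S x (comp S y (conv S y)))) (C y)) /\
    (* (C6a) *) (forall x, ele (C (meet S (one S) (comp S x (conv S x)))) (C x)) /\
    (* (C6b) *) (forall x, ele (C (meet S (one S) (comp S (conv S x) x))) (C x))).
Proof.
  split; [exact (count_bot S C HC)|].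
  split; [exact (count_atom S C HC)|].
  split; [exact (count_conv S C HC)|].
  split; [exact (count_sup_meet S C HC)|].
  split; [exact (count_mono S C HC)|].
  intros Hat.
  split; [exact (count_eq0 S C HC Hat)|].
  split; [exact (count_conv_comp_meet S C HC Hat)|].
  split; [exact (count_meet_comp_conv S C HC Hat)|].
  split; [exact (count_comp_univalent S C HC Hat)|].
  split; [exact (count_meet_comp_top S C HC Hat)|].
  split; [exact (count_meet_comp_conv_self S C HC Hat)|].
  split; [exact (count_one_meet_comp_conv S C HC Hat)|].
  exact (count_one_meet_conv_comp S C HC Hat).
Qed.
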